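(* Let $n=p_1^{\alpha_1}p_2^{\alpha_2}p_3^{\alpha_3}$, where $\alpha_1,\alpha_2,\alpha_3$ are positive integers and $p_1<p_2<p_3$ are primes. Let $i,j\in\{1,2,3\}$ with $i<j$. If $1\leq\beta_i\leq\alpha_i$ and $2\leq\beta_j\leq\alpha_j$, then $\deg(p_i^{\beta_i}p_j^{\beta_j})>\deg(p_i^{\beta_i-1}p_j^{\beta_j})$ in $\mathcal{P}(C_n)$.
   Context: For a finite group $G$, the power graph $\mathcal{P}(G)$ is the simple undirected graph with vertex set $G$ in which two distinct vertices are adjacent if one is an integral power of the other. $C_n$ denotes the cyclic group of order $n$, identified with $\mathbb{Z}_n=\{0,1,\ldots,n-1\}$, so a positive divisor $d$ of $n$ is regarded as the element $d\bmod n\in\mathbb{Z}_n$. $\deg(a)$ is the degree of vertex $a$ in $\mathcal{P}(C_n)$. *)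

From mathcomp Require Import all_boot.
Set Implicit Arguments. Unset Strict Implicit. Unset Printing Implicit Defensive.

(* C_n identified with Z_n = {0,...,n-1} (additive).  In additive notation,
   "b is an integral power of a" means b = k*a (mod n) for some integer k;
   since k*a mod n only depends on k mod n, k ranges over 0..n-1. *)
Definition is_power (n a b : nat) : bool :=
  [exists k : 'I_n, b %% n == (k * a) %% n].

Definition pg_adj (n a b : nat) : bool :=
  (a %% n != b %% n) && (is_power n a b || is_power n b a).

Definition pg_deg (n a : nat) : nat :=
  #|[set b : 'I_n | pg_adj n a b]|.

Definition tri (x y z : nat) (i : 'I_3) : nat := nth 0 [:: x; y; z] i.

From mathcomp Require Import all_boot zify.
From Stdlib Require Import ArithRing.

Set Implicit Arguments.
Unset Strict Implicit.
Unset Printing Implicit Defensive.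

(* Let Y | X be proper divisors of n.  In P(C_n) the neighbours of a divisor a
   of n are the residues b <> a with a | b (powers of a) or gcd(b, n) | a
   (residues of which a is a power).  Hence
   - a neighbour of Y that is not a neighbour of X is X itself or a multiple
     of Y that is not a multiple of X: at most 1 + n/Y - n/X residues;
   - Y, and every b whose gcd with n is a divisor e of X incomparable with Y,
     is a neighbour of X but not of Y; each such gcd class has at least
     phi(n/e) elements.
   So deg Y < deg X as soon as two such classes e1, e2 beat n/Y - n/X
   (lemma pg_deg_lt_of_classes).  For X = p^b q^b', Y = X/p (b' >= 2) we take
   e1 = p^b and e2 = p^b q, and the required inequality between n/Y - n/X and
   phi(n/e1) + phi(n/e2) is an estimate on totients of prime powers
   (lemma gap_lt_totients). *)

Section PowerGraphOfCyclicGroup.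

Variable n : nat.
Hypothesis n_gt0 : 0 < n.

(* b is a multiple of a in Z_n iff gcd(a, n) divides the residue of b
   (Bezout); this turns adjacency into a divisibility test. *)
Lemma is_powerE a b : is_power n a b = (gcdn a n %| b %% n).
Proof.
apply/existsP/idP => [[k /eqP ->]|].
  by rewrite /dvdn modn_dvdm ?dvdn_gcdr // -/(dvdn _ _) dvdn_mull ?dvdn_gcdl.
have [->|a_gt0] := posnP a.
  rewrite gcd0n => n_dvd_b; exists (Ordinal n_gt0); rewrite muln0 mod0n.
  have [//|b_gt0] := posnP (b %% n).
  by have := dvdn_leq b_gt0 n_dvd_b; rewrite leqNgt ltn_pmod.
case: (egcdnP n a_gt0) => km kn def_g _ /dvdnP [q def_b].
exists (Ordinal (ltn_pmod (km * q) n_gt0)) => /=.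
by rewrite modnMml mulnAC def_g mulnDl mulnAC modnMDl mulnC -def_b modn_mod.
Qed.

Definition nbhd a := [set b : 'I_n | pg_adj n a b].

Lemma pg_adj_divisor a (b : 'I_n) : a < n -> a %| n ->
  pg_adj n a b = (a != b) && ((a %| b) || (gcdn b n %| a)).
Proof.
move=> a_lt_n a_dvd_n.
by rewrite /pg_adj !is_powerE !modn_small // (gcdn_idPl a_dvd_n).
Qed.

Section Multiples.

Variable d : nat.
Hypothesis d_dvd_n : d %| n.

Definition mul_ord (c : 'I_(n %/ d)) : 'I_n := insubd (Ordinal n_gt0) (c * d).

Lemma mul_ordE c : val (mul_ord c) = c * d.
Proof. by rewrite val_insubd -ltn_divRL ?ltn_ord. Qed.

Lemma mul_ord_inj : injective mul_ord.
Proof.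
have d_gt0 := dvdn_gt0 n_gt0 d_dvd_n.
by move=> c c' /(congr1 val); rewrite !mul_ordE => /eqP; rewrite eqn_pmul2r // => /eqP /val_inj.
Qed.

Lemma card_multiples : #|[set b : 'I_n | d %| b]| = n %/ d.
Proof.
have d_gt0 := dvdn_gt0 n_gt0 d_dvd_n.
suff -> : [set b : 'I_n | d %| b] = mul_ord @: setT.
  by rewrite card_imset ?cardsT ?card_ord //; exact: mul_ord_inj.
apply/setP => b; rewrite inE; apply/idP/imsetP => [/dvdnP [q def_b]|[c _ ->]].
  have q_lt : q < n %/ d by rewrite ltn_divRL // -def_b.
  by exists (Ordinal q_lt); rewrite ?inE //; apply: val_inj; rewrite mul_ordE.
by rewrite mul_ordE dvdn_mull.
Qed.

(* At least phi(n / d) residues b satisfy gcd(b, n) = d, namely the c * d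
   with c coprime to n / d. *)
Lemma totient_le_card_gcd : totient (n %/ d) <= #|[set b : 'I_n | gcdn b n == d]|.
Proof.
have cardE : totient (n %/ d) = #|mul_ord @: [set c : 'I_(n %/ d) | coprime (n %/ d) c]|.
  rewrite card_imset; last exact: mul_ord_inj.
  rewrite totient_count_coprime big_mkord -sum1_card [RHS]big_mkcond /=.
  by apply: eq_bigr => c _; rewrite inE; case: coprime.
rewrite cardE; apply/subset_leq_card/subsetP => b /imsetP [c].
rewrite !inE => cop_c ->; rewrite mul_ordE -{2}(divnK d_dvd_n) -muln_gcdl gcdnC.
by rewrite (eqP cop_c) mul1n.
Qed.

End Multiples.

Section DegreeComparison.

Variables X Y : nat.
Hypotheses (X_dvd_n : X %| n) (X_lt_n : X < n) (Y_dvd_X : Y %| X) (Y_lt_X : Y < X).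

Let Y_lt_n : Y < n. Proof. exact: ltn_trans Y_lt_X X_lt_n. Qed.
Let Y_dvd_n : Y %| n. Proof. exact: dvdn_trans Y_dvd_X X_dvd_n. Qed.

(* A neighbour of Y that is not a neighbour of X is X itself or a multiple
   of Y that is not a multiple of X. *)
Lemma card_nbhd_diff_le : #|nbhd Y :\: nbhd X| <= (n %/ Y - n %/ X).+1.
Proof.
pose mult d := [set b : 'I_n | d %| b].
have card_new : #|mult Y :\: mult X| = n %/ Y - n %/ X.
  rewrite cardsD (setIidPr _) ?card_multiples //.
  by apply/subsetP => b; rewrite !inE; exact: dvdn_trans.
rewrite -card_new; pose x0 := Ordinal X_lt_n.
apply: leq_trans (_ : #|x0 |: (mult Y :\: mult X)| <= _); last first.
  by rewrite cardsU1 -add1n leq_add2r leq_b1.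
apply/subset_leq_card/subsetP => b; rewrite !inE !pg_adj_divisor //.
have [-> //|b_neq_x0] := eqVneq b x0.
have X_neq_b : X != b by apply: contra b_neq_x0 => /eqP X_b; apply/eqP/val_inj.
rewrite X_neq_b /= negb_or => /and3P [/andP [X_ndvd_b gcd_ndvd_X] _].
case/orP => [Y_dvd_b|gcd_dvd_Y]; first by rewrite X_ndvd_b.
by rewrite (dvdn_trans gcd_dvd_Y Y_dvd_X) in gcd_ndvd_X.
Qed.

Lemma Y_in_nbhd_diff (y : 'I_n) : val y = Y -> y \in nbhd X :\: nbhd Y.
Proof.
move=> yE; rewrite !inE !pg_adj_divisor // yE eqxx /= (gcdn_idPl Y_dvd_n).
by rewrite Y_dvd_X orbT (gtn_eqF Y_lt_X).
Qed.

Lemma gcd_class_sub_nbhd_diff e : e %| X -> ~~ (e %| Y) -> ~~ (Y %| e) ->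
  [set b : 'I_n | gcdn b n == e] \subset nbhd X :\: nbhd Y.
Proof.
move=> e_dvd_X e_ndvd_Y Y_ndvd_e; apply/subsetP => b; rewrite !inE => /eqP gcd_b.
have Y_ndvd_b : ~~ (Y %| b).
  by apply: contra Y_ndvd_e => Y_dvd_b; rewrite -gcd_b dvdn_gcd Y_dvd_b.
have X_ndvd_b : ~~ (X %| b) by apply: contra Y_ndvd_b; exact: dvdn_trans.
rewrite !pg_adj_divisor // gcd_b (negbTE Y_ndvd_b) (negbTE e_ndvd_Y) andbF.
by rewrite e_dvd_X orbT andbT; apply: contra X_ndvd_b => /eqP ->.
Qed.

Lemma pg_deg_lt_of_classes e1 e2 :
  e1 != e2 -> e1 %| X -> e2 %| X -> ~~ (e1 %| Y) -> ~~ (e2 %| Y) ->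
  ~~ (Y %| e1) -> ~~ (Y %| e2) ->
  n %/ Y - n %/ X < totient (n %/ e1) + totient (n %/ e2) ->
  pg_deg n Y < pg_deg n X.
Proof.
move=> e12 e1X e2X e1Y e2Y Ye1 Ye2 small_gap.
pose class e := [set b : 'I_n | gcdn b n == e].
pose y0 := Ordinal Y_lt_n.
have y0_notin e : ~~ (e %| Y) -> y0 \notin class e.
  by apply: contra; rewrite inE (gcdn_idPl Y_dvd_n) => /eqP ->.
have disj : class e1 :&: class e2 = set0.
  by apply/setP => b; rewrite !inE; case: eqP => //= ->; rewrite (negbTE e12).
have lower : (totient (n %/ e1) + totient (n %/ e2)).+1 <= #|nbhd X :\: nbhd Y|.
  apply: leq_trans (_ : #|y0 |: (class e1 :|: class e2)| <= _).
    rewrite cardsU1 inE negb_or !y0_notin // cardsU disj cards0 subn0.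
    by rewrite add1n ltnS leq_add ?totient_le_card_gcd ?(dvdn_trans _ X_dvd_n).
  apply/subset_leq_card; rewrite subUset sub1set Y_in_nbhd_diff //.
  by rewrite subUset !gcd_class_sub_nbhd_diff.
rewrite /pg_deg -/(nbhd X) -/(nbhd Y).
rewrite -(cardsID (nbhd X) (nbhd Y)) -(cardsID (nbhd Y) (nbhd X)) setIC ltn_add2l.
exact: leq_ltn_trans card_nbhd_diff_le (leq_trans _ lower).
Qed.

End DegreeComparison.

End PowerGraphOfCyclicGroup.

Lemma prime_expn_gt0 p e : prime p -> 0 < p ^ e.
Proof. by move=> /prime_gt0 p_gt0; rewrite expn_gt0 p_gt0. Qed.

Lemma divn_factor n x m : 0 < n -> n = x * m -> n %/ x = m.
Proof. by move=> + nE; rewrite nE muln_gt0 => /andP [x_gt0 _]; rewrite mulKn. Qed.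

Lemma totient_pow_ge p k : prime p -> p ^ k * p.-1 <= totient (p ^ k) * p.
Proof.
move=> p_pr; case: k => [|k].
  by rewrite expn0 mul1n (_ : totient 1 = 1) // mul1n leq_pred.
by rewrite totient_pfactor //= expnS; apply: eq_leq; nia.
Qed.

Lemma totient_pow_sum_ge q k v : prime q ->
  q ^ v * (q.-1 * q.+1) <= totient (q ^ (k.+2 + v)) + totient (q ^ (k.+1 + v)).
Proof.
move=> q_pr; have q_gt1 := prime_gt1 q_pr.
rewrite !totient_pfactor ?addSn //= -mulnDr mulnCA leq_pmul2l; last by lia.
rewrite mulnS addnC -expnSr.
by apply: leq_add; rewrite leq_pexp2l //; lia.
Qed.

Lemma mul_lt_sq_pred p q r : 2 <= p -> p < q -> 2 <= r -> p * r < q.-1 * q.+1 * r.-1.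
Proof.
move=> p_ge2 p_lt_q r_ge2.
have sq_ge : p * (p + 2) <= q.-1 * q.+1 by apply: leq_mul; lia.
apply: leq_trans (leq_mul sq_ge (leqnn r.-1)).
by case: r r_ge2 => [|r] //= r_gt0; nia.
Qed.

Lemma coprime_prime_pow p q a b : prime p -> prime q -> p != q -> coprime (p ^ a) (q ^ b).
Proof.
move=> p_pr q_pr p_neq_q.
by rewrite coprimeXl // coprimeXr // prime_coprime // dvdn_prime2 // (negbTE p_neq_q).
Qed.

Lemma totient_pow3 p q r a b c :
  prime p -> prime q -> prime r -> p != q -> p != r -> q != r ->
  totient (p ^ a * q ^ b * r ^ c) = totient (p ^ a) * totient (q ^ b) * totient (r ^ c).
Proof.
move=> p_pr q_pr r_pr pq pr qr.
by rewrite !totient_coprime ?coprimeMl ?coprime_prime_pow.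
Qed.

(* With M = p^u q^v r^w the cofactor of X in n, the number n/Y - n/X
   = (p - 1) M is smaller than phi(n/e1) + phi(n/e2), where
   n/e1 = p^u q^(k+2+v) r^w and n/e2 = p^u q^(k+1+v) r^w.  Multiplying by
   p r, this follows from the three prime-power estimates above. *)
Lemma gap_lt_totients p q r u v w k :
  prime p -> prime q -> prime r -> p < q -> p != r -> q != r -> 0 < w ->
  p.-1 * (p ^ u * q ^ v * r ^ w) <
  totient (p ^ u * q ^ (k.+2 + v) * r ^ w) + totient (p ^ u * q ^ (k.+1 + v) * r ^ w).
Proof.
move=> p_pr q_pr r_pr p_lt_q p_neq_r q_neq_r w_gt0.
have p_gt1 := prime_gt1 p_pr; have r_gt1 := prime_gt1 r_pr.
rewrite !totient_pow3 ?(ltn_eqF p_lt_q) // -mulnDl -mulnDr.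
have lowP := totient_pow_ge u p_pr.
have lowQ := totient_pow_sum_ge k v q_pr.
have eqR : totient (r ^ w) * r = r.-1 * r ^ w.
  by rewrite totient_pfactor // -mulnA -expnSr prednK.
have gap_gt0 : 0 < p.-1 * (p ^ u * q ^ v * r ^ w).
  by rewrite !muln_gt0 !prime_expn_gt0 //= andbT -subn1 subn_gt0.
set A := p ^ u; set B := q ^ v; set C := r ^ w.
set tA := totient A; set tQ := totient (q ^ (k.+2 + v)) + _; set tR := totient C.
rewrite -(ltn_pmul2r (_ : 0 < p * r)) ?muln_gt0 ?prime_gt0 //.
apply: leq_trans (_ : p.-1 * (A * B * C) * (q.-1 * q.+1 * r.-1) <= _).
  by rewrite ltn_pmul2l // mul_lt_sq_pred.
apply: leq_trans (_ : (A * p.-1) * (B * (q.-1 * q.+1)) * (r.-1 * C) <= _).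
  by apply: eq_leq; rewrite -!multE; ring.
apply: leq_trans (_ : (tA * p) * tQ * (tR * r) <= _).
  by rewrite eqR leq_mul // leq_mul.
by apply: eq_leq; rewrite -!multE; ring.
Qed.

Lemma logn_pow2 p q a b : prime p -> prime q -> p != q -> logn p (p ^ a * q ^ b) = a.
Proof.
move=> p_pr q_pr p_neq_q.
rewrite lognM ?prime_expn_gt0 // pfactorK // lognX logn_prime //.
by rewrite (negbTE p_neq_q) muln0 addn0.
Qed.

Lemma dvdn_pow2 p q a b a' b' : prime p -> prime q -> p != q ->
  (p ^ a * q ^ b %| p ^ a' * q ^ b') = (a <= a') && (b <= b').
Proof.
move=> p_pr q_pr p_neq_q; apply/idP/andP => [dv|[le_a le_b]].
  have pos : 0 < p ^ a' * q ^ b' by rewrite muln_gt0 !prime_expn_gt0.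
  split; first by move: (dvdn_leq_log p pos dv); rewrite !logn_pow2.
  have q_neq_p : q != p by rewrite eq_sym.
  by move: (dvdn_leq_log q pos dv); rewrite ![p ^ _ * _]mulnC !logn_pow2.
by apply: dvdn_mul; apply: dvdn_exp2l.
Qed.

(* The lemma for X = p^(c+1) q^(k+2) and Y = X / p inside
   n = p^(c+1+u) q^(k+2+v) r^w, using the gcd classes of p^(c+1) and
   p^(c+1) q. *)
Lemma pg_deg_lt_normal_form p q r c k u v w n :
  prime p -> prime q -> prime r -> p < q -> p != r -> q != r -> 0 < w ->
  n = p ^ (c.+1 + u) * q ^ (k.+2 + v) * r ^ w ->
  pg_deg n (p ^ c * q ^ k.+2) < pg_deg n (p ^ c.+1 * q ^ k.+2).
Proof.
move=> p_pr q_pr r_pr p_lt_q p_neq_r q_neq_r w_gt0 nE.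
have p_neq_q : p != q by rewrite ltn_eqF.
have dvdE a b a' b' := dvdn_pow2 a b a' b' p_pr q_pr p_neq_q.
set M := p ^ u * q ^ v * r ^ w.
set X := p ^ c.+1 * q ^ k.+2; set Y := p ^ c * q ^ k.+2.
have n_X : n = X * M by rewrite nE /X /M !expnD -!multE; ring.
have n_Y : n = Y * (p * M) by rewrite n_X /X /Y expnS -!multE; ring.
have n_e1 : n = p ^ c.+1 * q ^ 0 * (p ^ u * q ^ (k.+2 + v) * r ^ w).
  by rewrite nE !expnD expn0 -!multE; ring.
have n_e2 : n = p ^ c.+1 * q ^ 1 * (p ^ u * q ^ (k.+1 + v) * r ^ w).
  by rewrite nE !expnD expn1 (expnS q k.+1) -!multE; ring.
have M_gt1 : 1 < M.
  apply: leq_trans (leq_pmull _ _); last by rewrite muln_gt0 !prime_expn_gt0.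
  by rewrite -(expn0 r) ltn_exp2l // prime_gt1.
have X_gt0 : 0 < X by rewrite muln_gt0 !prime_expn_gt0.
have n_gt0 : 0 < n by rewrite n_X muln_gt0 X_gt0 ltnW.
apply: (@pg_deg_lt_of_classes n n_gt0 X Y _ _ _ _ (p ^ c.+1 * q ^ 0) (p ^ c.+1 * q ^ 1)).
- by rewrite n_X dvdn_mulr.
- by rewrite n_X ltn_Pmulr.
- by rewrite dvdE leqnSn leqnn.
- by rewrite /X /Y (expnS p c) -mulnA ltn_Pmull ?prime_gt1 // muln_gt0 !prime_expn_gt0.
- by rewrite eqn_pmul2l ?prime_expn_gt0 // expn0 expn1 neq_ltn prime_gt1.
- by rewrite dvdE leqnn.
- by rewrite dvdE leqnn.
- by rewrite dvdE ltnn.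
- by rewrite dvdE ltnn.
- by rewrite dvdE andbF.
- by rewrite dvdE andbF.
rewrite (divn_factor n_gt0 n_Y) (divn_factor n_gt0 n_X).
rewrite (divn_factor n_gt0 n_e1) (divn_factor n_gt0 n_e2) -{2}(mul1n M) -mulnBl subn1.
exact: gap_lt_totients.
Qed.

Lemma pg_deg_lt_prime_powers p q r ap aq ar bi bj n :
  prime p -> prime q -> prime r -> p < q -> p != r -> q != r -> 0 < ar ->
  n = p ^ ap * q ^ aq * r ^ ar -> 1 <= bi <= ap -> 2 <= bj <= aq ->
  pg_deg n (p ^ (bi - 1) * q ^ bj) < pg_deg n (p ^ bi * q ^ bj).
Proof.
move=> p_pr q_pr r_pr p_lt_q p_neq_r q_neq_r ar_gt0 nE.
case: bi => // c /andP [_ /subnKC apE]; rewrite subn1 /=.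
case: bj => [|[|k]] // /andP [_ /subnKC aqE].
rewrite -apE -aqE in nE.
exact: pg_deg_lt_normal_form nE.
Qed.

Theorem lemma5p1 (p1 p2 p3 a1 a2 a3 n : nat) (i j : 'I_3) (bi bj : nat) :
  prime p1 -> prime p2 -> prime p3 ->
  p1 < p2 -> p2 < p3 ->
  0 < a1 -> 0 < a2 -> 0 < a3 ->
  n = p1 ^ a1 * p2 ^ a2 * p3 ^ a3 ->
  i < j ->
  1 <= bi <= tri a1 a2 a3 i ->
  2 <= bj <= tri a1 a2 a3 j ->
  pg_deg n (tri p1 p2 p3 i ^ bi * tri p1 p2 p3 j ^ bj) >
  pg_deg n (tri p1 p2 p3 i ^ (bi - 1) * tri p1 p2 p3 j ^ bj).
Proof.
move=> p1_pr p2_pr p3_pr lt12 lt23 a1_gt0 a2_gt0 a3_gt0 nE.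
have lt13 := ltn_trans lt12 lt23.
have [ne12 ne13 ne23] : [/\ p1 != p2, p1 != p3 & p2 != p3] by rewrite !ltn_eqF.
case: i j => [[|[|[|i]]] //= i_lt3] [[|[|[|j]]] //= j_lt3] _; rewrite /tri /=.
-
  exact: pg_deg_lt_prime_powers p1_pr p2_pr p3_pr lt12 ne13 ne23 a3_gt0 nE.
-
  apply: pg_deg_lt_prime_powers p1_pr p3_pr p2_pr lt13 ne12 _ a2_gt0 _.
    by rewrite eq_sym.
  by rewrite nE mulnAC.
-
  apply: pg_deg_lt_prime_powers p2_pr p3_pr p1_pr lt23 _ _ a1_gt0 _.
  + by rewrite eq_sym.
  + by rewrite eq_sym.
  + by rewrite nE -mulnA mulnC.
Qed.
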